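(* Let $T$ be a $2\times3\times2$ quaternion tensor, i.e. $T=(A;B;C)$ with $A,B,C\in M_2(\mathbb{H})$. Then $\mathrm{rank}(T)\le3$.
   Context: $\mathbb{H}$ denotes the real quaternions. An $n_1\times n_2\times n_3$ quaternion tensor is an array $T=(T_{ijk})$ with entries in $\mathbb{H}$, $1\le i\le n_1$, $1\le j\le n_2$, $1\le k\le n_3$; it is written $T=(A_1;\dots;A_{n_2})$ where the frontal slice $A_j$ is the $n_1\times n_3$ matrix $(T_{ijk})_{i,k}$. A nonzero tensor is simple if $T_{ijk}=a_ib_jc_k$ (quaternion product in this order) for some $\vec a\in\mathbb{H}^{n_1},\vec b\in\mathbb{H}^{n_2},\vec c\in\mathbb{H}^{n_3}$. The rank of $T$ is the least number of simple tensors summing to $T$ (the zero tensor has rank $0$). *)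

From mathcomp Require Import all_boot all_order all_algebra.
From mathcomp Require Import reals.
Set Implicit Arguments. Unset Strict Implicit. Unset Printing Implicit Defensive.
Import GRing.Theory Num.Theory.
Local Open Scope ring_scope.

(* Real quaternions H = { q0 + q1 i + q2 j + q3 k : qi in R }, R : realType (the reals). *)
Record quat (R : realType) := Quat { q0 : R; q1 : R; q2 : R; q3 : R }.

Section Quat.
Variable R : realType.

Definition qzero : quat R := Quat 0 0 0 0.
Definition qadd (x y : quat R) : quat R :=
  Quat (q0 x + q0 y) (q1 x + q1 y) (q2 x + q2 y) (q3 x + q3 y).
(* Hamilton product: i^2 = j^2 = k^2 = ijk = -1 *)
Definition qmul (x y : quat R) : quat R :=
  Quat (q0 x * q0 y - q1 x * q1 y - q2 x * q2 y - q3 x * q3 y)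
       (q0 x * q1 y + q1 x * q0 y + q2 x * q3 y - q3 x * q2 y)
       (q0 x * q2 y - q1 x * q3 y + q2 x * q0 y + q3 x * q1 y)
       (q0 x * q3 y + q1 x * q2 y - q2 x * q1 y + q3 x * q0 y).

Definition qtensor (n1 n2 n3 : nat) := 'I_n1 -> 'I_n2 -> 'I_n3 -> quat R.

Definition tzero n1 n2 n3 : qtensor n1 n2 n3 := fun _ _ _ => qzero.
Definition tadd n1 n2 n3 (S T : qtensor n1 n2 n3) : qtensor n1 n2 n3 :=
  fun i j k => qadd (S i j k) (T i j k).

Definition outer3 n1 n2 n3 (a : 'I_n1 -> quat R) (b : 'I_n2 -> quat R)
  (c : 'I_n3 -> quat R) : qtensor n1 n2 n3 :=
  fun i j k => qmul (qmul (a i) (b j)) (c k).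

Definition simple_tensor n1 n2 n3 (T : qtensor n1 n2 n3) : Prop :=
  T <> @tzero n1 n2 n3 /\
  exists a b c, T = @outer3 n1 n2 n3 a b c.

(* rank T <= r  iff  T is a sum of at most r simple tensors
   (the empty sum is the zero tensor, of rank 0). Since the rank is the
   least such number, this is exactly "rank(T) <= r". *)
Definition qtensor_rank_le n1 n2 n3 (T : qtensor n1 n2 n3) (r : nat) : Prop :=
  exists m : nat, (m <= r)%N /\
  exists S : 'I_m -> qtensor n1 n2 n3,
    (forall l, simple_tensor (S l)) /\
    T = foldr (fun l acc => @tadd n1 n2 n3 (S l) acc) (@tzero n1 n2 n3) (enum 'I_m).

End Quat.

(* Write T = (M 0; M 1; M 2) with 2x2 quaternion slices M j.  It suffices to
   find a, c : 'I_3 -> H^2 and q : 'I_3 -> H^3 with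
   M j i k = sum_(l < 3) a_l(i) q_l(j) c_l(k)   ("decomp3 M"),
   a property invariant under M j |-> X M j Z for invertible X, Z and under
   reordering of the slices.  There are two cases.
   - The slices, viewed in the real vector space H^4, are R-dependent.  Then
     one slice is a real combination of the other two, and the 2x2x2 case is
     handled by pivoting on a nonzero entry (decomp3_dependent).
   - The slices are R-independent.  A dimension argument about right
     H-modules (exists_mix_free) yields invertible X, Z making the three
     (0,0) entries R-independent (normalize_corner).  Then either a row or a
     column change makes all slices triangular, or a kernel computation on the
     "asymmetry map", combined with the faithfulness of t |-> sum a_j t h_j
     (sandwich_free_eq0), gives X, Z making all slices symmetric
     (decomp3_free_corner).  Triangular and symmetric triples have explicit
     three-term decompositions. *)
From HB Require Import structures.
From Stdlib Require Import Classical_Prop FunctionalExtensionality.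
From mathcomp Require Import all_boot all_order all_algebra.
From mathcomp Require Import reals.
From mathcomp Require Import ring lra.
Set Implicit Arguments. Unset Strict Implicit. Unset Printing Implicit Defensive.
Import GRing.Theory Num.Theory.
Local Open Scope ring_scope.

Section QuaternionAlgebra.
Variable R : realType.
Local Notation H := (quat R).

Lemma quat_eq (x y : H) :
  q0 x = q0 y -> q1 x = q1 y -> q2 x = q2 y -> q3 x = q3 y -> x = y.
Proof. by case: x => a b c d; case: y => a' b' c' d' /= -> -> -> ->. Qed.

Local Ltac qeq := apply: quat_eq => /=; ring.

Definition quat_tuple (x : H) := (q0 x, q1 x, q2 x, q3 x).
Definition tuple_quat (t : R * R * R * R) : H := let: (a, b, c, d) := t in Quat a b c d.
Lemma quat_tupleK : cancel quat_tuple tuple_quat. Proof. by case. Qed.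
HB.instance Definition _ := Equality.copy H (can_type quat_tupleK).
HB.instance Definition _ := Choice.copy H (can_type quat_tupleK).

Definition qopp (x : H) : H := Quat (- q0 x) (- q1 x) (- q2 x) (- q3 x).
Lemma qaddA : associative (@qadd R). Proof. by move=> x y z; qeq. Qed.
Lemma qaddC : commutative (@qadd R). Proof. by move=> x y; qeq. Qed.
Lemma qadd0 : left_id (@qzero R) (@qadd R). Proof. by move=> x; qeq. Qed.
Lemma qaddN : left_inverse (@qzero R) qopp (@qadd R). Proof. by move=> x; qeq. Qed.
HB.instance Definition _ := GRing.isZmodule.Build H qaddA qaddC qadd0 qaddN.

Definition qone : H := Quat 1 0 0 0.
Lemma qmulA : associative (@qmul R). Proof. by move=> x y z; qeq. Qed.
Lemma qmul1 : left_id qone (@qmul R). Proof. by move=> x; qeq. Qed.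
Lemma qmulr1 : right_id qone (@qmul R). Proof. by move=> x; qeq. Qed.
Lemma qmulDl : left_distributive (@qmul R) +%R. Proof. by move=> x y z; qeq. Qed.
Lemma qmulDr : right_distributive (@qmul R) +%R. Proof. by move=> x y z; qeq. Qed.
Lemma qone_neq0 : qone != 0.
Proof. by apply/eqP => /(congr1 (@q0 R)) /= /eqP; rewrite oner_eq0. Qed.
HB.instance Definition _ :=
  GRing.Zmodule_isNzRing.Build H qmulA qmul1 qmulr1 qmulDl qmulDr qone_neq0.

Definition qscale (r : R) (x : H) : H := Quat (r * q0 x) (r * q1 x) (r * q2 x) (r * q3 x).
Lemma qscaleA a b v : qscale a (qscale b v) = qscale (a * b) v. Proof. qeq. Qed.
Lemma qscale1 : left_id 1 qscale. Proof. by move=> x; qeq. Qed.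
Lemma qscaleDr : right_distributive qscale +%R. Proof. by move=> a x y; qeq. Qed.
Lemma qscaleDl v : {morph qscale^~ v: a b / a + b}. Proof. by move=> a b; qeq. Qed.
HB.instance Definition _ :=
  GRing.Zmodule_isLmodule.Build R H qscaleA qscale1 qscaleDr qscaleDl.
Lemma qscaleAl (a : R) (u v : H) : a *: (u * v) = (a *: u) * v. Proof. qeq. Qed.
HB.instance Definition _ := GRing.Lmodule_isLalgebra.Build R H qscaleAl.

Lemma qscaleAr (r : R) (x y : H) : r *: (x * y) = x * (r *: y). Proof. qeq. Qed.

Section Components.
Implicit Types x y : H.
Lemma q0D x y : q0 (x + y) = q0 x + q0 y. Proof. by []. Qed.
Lemma q1D x y : q1 (x + y) = q1 x + q1 y. Proof. by []. Qed.
Lemma q2D x y : q2 (x + y) = q2 x + q2 y. Proof. by []. Qed.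
Lemma q3D x y : q3 (x + y) = q3 x + q3 y. Proof. by []. Qed.
Lemma q0N x : q0 (- x) = - q0 x. Proof. by []. Qed.
Lemma q1N x : q1 (- x) = - q1 x. Proof. by []. Qed.
Lemma q2N x : q2 (- x) = - q2 x. Proof. by []. Qed.
Lemma q3N x : q3 (- x) = - q3 x. Proof. by []. Qed.
Lemma q0M x y : q0 (x * y) = q0 x * q0 y - q1 x * q1 y - q2 x * q2 y - q3 x * q3 y.
Proof. by []. Qed.
Lemma q1M x y : q1 (x * y) = q0 x * q1 y + q1 x * q0 y + q2 x * q3 y - q3 x * q2 y.
Proof. by []. Qed.
Lemma q2M x y : q2 (x * y) = q0 x * q2 y - q1 x * q3 y + q2 x * q0 y + q3 x * q1 y.
Proof. by []. Qed.
Lemma q3M x y : q3 (x * y) = q0 x * q3 y + q1 x * q2 y - q2 x * q1 y + q3 x * q0 y.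
Proof. by []. Qed.
Lemma q0Z (r : R) x : q0 (r *: x) = r * q0 x. Proof. by []. Qed.
Lemma q1Z (r : R) x : q1 (r *: x) = r * q1 x. Proof. by []. Qed.
Lemma q2Z (r : R) x : q2 (r *: x) = r * q2 x. Proof. by []. Qed.
Lemma q3Z (r : R) x : q3 (r *: x) = r * q3 x. Proof. by []. Qed.
Lemma q0_0 : q0 (0 : H) = 0. Proof. by []. Qed.
Lemma q1_0 : q1 (0 : H) = 0. Proof. by []. Qed.
Lemma q2_0 : q2 (0 : H) = 0. Proof. by []. Qed.
Lemma q3_0 : q3 (0 : H) = 0. Proof. by []. Qed.
Lemma q0_1 : q0 (1 : H) = 1. Proof. by []. Qed.
Lemma q1_1 : q1 (1 : H) = 0. Proof. by []. Qed.
Lemma q2_1 : q2 (1 : H) = 0. Proof. by []. Qed.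
Lemma q3_1 : q3 (1 : H) = 0. Proof. by []. Qed.
End Components.

Lemma qaddE (x y : H) : x + y = qadd x y. Proof. by []. Qed.
Lemma qmulE (x y : H) : x * y = qmul x y. Proof. by []. Qed.
Lemma qzeroE : (0 : H) = qzero R. Proof. by []. Qed.

End QuaternionAlgebra.

Ltac qsimp := rewrite ?q0D ?q1D ?q2D ?q3D ?q0N ?q1N ?q2N ?q3N ?q0M ?q1M ?q2M ?q3M
  ?q0Z ?q1Z ?q2Z ?q3Z ?q0_0 ?q1_0 ?q2_0 ?q3_0 ?q0_1 ?q1_1 ?q2_1 ?q3_1 /=.
Ltac qring := apply: quat_eq; qsimp; ring.

Section QuaternionDivisionRing.
Variable R : realType.
Local Notation H := (quat R).

Definition qconj (x : H) : H := Quat (q0 x) (- q1 x) (- q2 x) (- q3 x).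
Definition qnorm (x : H) : R := q0 x ^+ 2 + q1 x ^+ 2 + q2 x ^+ 2 + q3 x ^+ 2.

Lemma qnorm_eq0 (x : H) : qnorm x = 0 -> x = 0.
Proof.
case: x => a b c d; rewrite /qnorm /= => h.
move: (sqr_ge0 a) (sqr_ge0 b) (sqr_ge0 c) (sqr_ge0 d) => sa sb sc sd.
have [ha hb hc hd] : [/\ a ^+ 2 = 0, b ^+ 2 = 0, c ^+ 2 = 0 & d ^+ 2 = 0] by split; lra.
by apply: quat_eq => /=; apply/eqP; rewrite -sqrf_eq0; apply/eqP.
Qed.

Definition qinv (x : H) : H := if x != 0 then (qnorm x)^-1 *: qconj x else x.

Lemma qinv_inverse (x : H) : x != 0 -> qinv x * x = 1 /\ x * qinv x = 1.
Proof.
move=> nx; have hn : qnorm x != 0 by apply: contra nx => /eqP /qnorm_eq0 ->.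
rewrite /qinv nx; move: hn; case: x {nx} => a b c d; rewrite /qnorm /= => hn.
by split; apply: quat_eq; rewrite /= /qnorm /=; field; exact: hn.
Qed.

Lemma qunitrP (x y : H) : y * x = 1 /\ x * y = 1 -> x != 0.
Proof.
case=> yx _; apply/eqP => x0; move/eqP: yx.
by rewrite x0 mulr0 eq_sym oner_eq0.
Qed.

Lemma qinv_out : {in [predC (fun x : H => x != 0)], qinv =1 id}.
Proof. by move=> x hx; rewrite /qinv ifN //; exact: hx. Qed.

HB.instance Definition _ := GRing.NzRing_hasMulInverse.Build H
  (fun x xu => (qinv_inverse xu).1) (fun x xu => (qinv_inverse xu).2) qunitrP qinv_out.

Lemma qunitE (x : H) : (x \is a GRing.unit) = (x != 0). Proof. by []. Qed.

Lemma qconjD (x y : H) : qconj (x + y) = qconj x + qconj y. Proof. qring. Qed.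
Lemma qconjZ (r : R) (x : H) : qconj (r *: x) = r *: qconj x. Proof. qring. Qed.
Lemma qconjM (x y : H) : qconj (x * y) = qconj y * qconj x. Proof. qring. Qed.
Lemma qconjK (x : H) : qconj (qconj x) = x. Proof. qring. Qed.
Lemma qconj1 : qconj 1 = 1 :> H. Proof. qring. Qed.
Lemma qconj_eq0 (x : H) : qconj x = 0 -> x = 0.
Proof. by move=> h; rewrite -[x]qconjK h; qring. Qed.

Definition quat_row (x : H) : 'rV[R]_4 := \row_(i < 4) [:: q0 x; q1 x; q2 x; q3 x]`_i.
Definition row_quat (v : 'rV[R]_4) : H := Quat (v 0 0) (v 0 1) (v 0 2) (v 0 3).
Lemma quat_row_linear : linear quat_row.
Proof.
move=> r x y; apply/rowP => i; rewrite !mxE.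
by case: i => [[|[|[|[|i]]]] hi] //=; rewrite ?mulr0 ?addr0.
Qed.
Lemma quat_rowK : cancel quat_row row_quat. Proof. by case=> a b c d; rewrite /row_quat !mxE. Qed.
Lemma row_quatK : cancel row_quat quat_row.
Proof.
move=> v; apply/rowP => i; rewrite mxE /=.
by case: i => [[|[|[|[|i]]]] hi] //=; congr (v _ _); apply/val_inj.
Qed.
Fact quat_vector_axiom : Vector.axiom 4 H.
Proof. by exists quat_row; [exact: quat_row_linear | exact: Bijective quat_rowK row_quatK]. Qed.
HB.instance Definition _ := Lmodule_hasFinDim.Build R H quat_vector_axiom.

Definition qI : H := Quat 0 1 0 0.
Definition qJ : H := Quat 0 0 1 0.
Definition qK : H := Quat 0 0 0 1.

Lemma qI_neq0 : qI != 0. Proof. by apply/eqP => /(congr1 (@q1 R)) /= /eqP; rewrite oner_eq0. Qed.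
Lemma qJ_neq0 : qJ != 0. Proof. by apply/eqP => /(congr1 (@q2 R)) /= /eqP; rewrite oner_eq0. Qed.
Lemma qK_neq0 : qK != 0. Proof. by apply/eqP => /(congr1 (@q3 R)) /= /eqP; rewrite oner_eq0. Qed.

Lemma quat_basis_coord (r0 r1 r2 r3 : R) :
  r0 *: 1 + r1 *: qI + r2 *: qJ + r3 *: qK = 0 -> [/\ r0 = 0, r1 = 0, r2 = 0 & r3 = 0].
Proof.
move=> /[dup] /(congr1 (@q0 R)) e0 /[dup] /(congr1 (@q1 R)) e1
       /[dup] /(congr1 (@q2 R)) e2 /(congr1 (@q3 R)) e3.
by move: e0 e1 e2 e3; qsimp; split; lra.
Qed.

End QuaternionDivisionRing.

Section ShortFamilies.
Variables (K : fieldType) (V : vectType K).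
Implicit Types a b c d v x y z : V.

Lemma free2P a b :
  reflect (forall r0 r1 : K, r0 *: a + r1 *: b = 0 -> r0 = 0 /\ r1 = 0)
          (free [:: a; b]).
Proof.
apply: (iffP (@freeP _ _ _ [tuple a; b])) => [h r0 r1 e|h k e i].
  pose k := (fun i : 'I_2 => [:: r0; r1]`_i).
  have ek : \sum_(i < 2) k i *: [tuple a; b]`_i = 0.
    by rewrite !big_ord_recr big_ord0 /= add0r.
  by split; [exact: (h k ek 0) | exact: (h k ek 1)].
move: e; rewrite !big_ord_recr big_ord0 /= add0r => /h [h0 h1].
by case: i => [[|[|i]] hi] //; [apply: etrans h0 | apply: etrans h1]; congr k; exact: val_inj.
Qed.

Lemma free3P a b c :
  reflect (forall r0 r1 r2 : K, r0 *: a + r1 *: b + r2 *: c = 0 ->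
             [/\ r0 = 0, r1 = 0 & r2 = 0])
          (free [:: a; b; c]).
Proof.
apply: (iffP (@freeP _ _ _ [tuple a; b; c])) => [h r0 r1 r2 e|h k e i].
  pose k := (fun i : 'I_3 => [:: r0; r1; r2]`_i).
  have ek : \sum_(i < 3) k i *: [tuple a; b; c]`_i = 0.
    by rewrite !big_ord_recr big_ord0 /= add0r.
  by split; [exact: (h k ek 0) | exact: (h k ek 1) | exact: (h k ek 2)].
move: e; rewrite !big_ord_recr big_ord0 /= add0r => /h [h0 h1 h2].
case: i => [[|[|[|i]]] hi] //.
- by apply: etrans h0; congr k; exact: val_inj.
- by apply: etrans h1; congr k; exact: val_inj.
- by apply: etrans h2; congr k; exact: val_inj.
Qed.

Lemma free4P a b c d :
  reflect (forall r0 r1 r2 r3 : K, r0 *: a + r1 *: b + r2 *: c + r3 *: d = 0 ->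
             [/\ r0 = 0, r1 = 0, r2 = 0 & r3 = 0])
          (free [:: a; b; c; d]).
Proof.
apply: (iffP (@freeP _ _ _ [tuple a; b; c; d])) => [h r0 r1 r2 r3 e|h k e i].
  pose k := (fun i : 'I_4 => [:: r0; r1; r2; r3]`_i).
  have ek : \sum_(i < 4) k i *: [tuple a; b; c; d]`_i = 0.
    by rewrite !big_ord_recr big_ord0 /= add0r.
  by split; [exact: (h k ek 0) | exact: (h k ek 1) | exact: (h k ek 2) | exact: (h k ek 3)].
move: e; rewrite !big_ord_recr big_ord0 /= add0r => /h [h0 h1 h2 h3].
case: i => [[|[|[|[|i]]]] hi] //.
- by apply: etrans h0; congr k; exact: val_inj.
- by apply: etrans h1; congr k; exact: val_inj.
- by apply: etrans h2; congr k; exact: val_inj.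
- by apply: etrans h3; congr k; exact: val_inj.
Qed.

Lemma not_free2 a b : ~~ free [:: a; b] ->
  exists r0 r1 : K, r0 *: a + r1 *: b = 0 /\ ~ (r0 = 0 /\ r1 = 0).
Proof.
move=> /negP nf; apply: NNPP => hn; apply: nf; apply/free2P => r0 r1 e.
by apply: NNPP => hz; apply: hn; exists r0, r1.
Qed.

Lemma not_free3 a b c : ~~ free [:: a; b; c] ->
  exists r0 r1 r2 : K,
    r0 *: a + r1 *: b + r2 *: c = 0 /\ ~ [/\ r0 = 0, r1 = 0 & r2 = 0].
Proof.
move=> /negP nf; apply: NNPP => hn; apply: nf; apply/free3P => r0 r1 r2 e.
by apply: NNPP => hz; apply: hn; exists r0, r1, r2.
Qed.

Lemma memv_span2P a b v :
  reflect (exists r0 r1 : K, v = r0 *: a + r1 *: b) (v \in <<[:: a; b]>>%VS).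
Proof.
apply: (iffP idP) => [|[r0 [r1 ->]]]; last first.
  by rewrite memvD ?memvZ ?memv_span ?inE ?eqxx ?orbT.
rewrite span_cons span_seq1 => /memv_addP [x /vlineP[r0 ->]] [y /vlineP[r1 ->] ->].
by exists r0, r1.
Qed.

Lemma memv_span3P a b c v :
  reflect (exists r0 r1 r2 : K, v = r0 *: a + r1 *: b + r2 *: c)
          (v \in <<[:: a; b; c]>>%VS).
Proof.
apply: (iffP idP) => [|[r0 [r1 [r2 ->]]]]; last first.
  by rewrite !memvD ?memvZ ?memv_span ?inE ?eqxx ?orbT.
rewrite span_cons => /memv_addP [x /vlineP[r0 ->]] [y /memv_span2P[r1 [r2 ->]] ->].
by exists r0, r1, r2; rewrite addrA.
Qed.

Lemma free_in_span2 a b (X : seq V) :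
  free X -> {subset X <= <<[:: a; b]>>%VS} -> (size X <= 2)%N.
Proof.
move=> /eqP fX sub; rewrite -fX.
by apply: leq_trans (dim_span [:: a; b]); apply: dimvS; exact/span_subvP.
Qed.

Lemma free_shear x y z (r : K) : free [:: x; y; z] -> free [:: z + r *: x; y; x].
Proof.
move/free3P => h; apply/free3P => a b c e.
have e' : (a * r + c) *: x + b *: y + a *: z = 0.
  rewrite -e scalerDr scalerA scalerDl.
  by rewrite [a *: z + _]addrC -!addrA; congr (_ + _); rewrite addrCA addrA addrC.
have [h1 h2 h3] := h _ _ _ e'.
by move: h1; rewrite h3 mul0r add0r => ->.
Qed.

Lemma free_unshear x y z c (e : K) : e != 0 -> free [:: x + e *: c; y; z] ->
  free [:: c + e^-1 *: x; y; e^-1 *: z].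
Proof.
move=> ne /free3P h; apply/free3P => a b d E.
have E' : (a / e) *: (x + e *: c) + b *: y + (d / e) *: z = 0.
  rewrite -E scalerDr !scalerA mulfVK // scalerDr scalerA [_ *: c + _]addrC.
  by rewrite -[d / e]mulrC.
have [h1 h2 h3] := h _ _ _ E'.
split => //.
- by move/eqP: h1; rewrite mulf_eq0 invr_eq0 (negPf ne) orbF => /eqP.
- by move/eqP: h3; rewrite mulf_eq0 invr_eq0 (negPf ne) orbF => /eqP.
Qed.

End ShortFamilies.

(* If x, y, z are independent, then so is x + e c, y, z for e = 1 or e = 2:
   otherwise x = 2 (x + c) - (x + 2 c) would lie in the span of y and z. *)
Lemma free_perturb (K : numFieldType) (V : vectType K) (x y z c : V) :
  free [:: x; y; z] -> exists2 e : K, e != 0 & free [:: x + e *: c; y; z].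
Proof.
move=> fxyz; have fyz : free [:: y; z] by move: fxyz; rewrite free_cons => /andP[].
have in_span (e : K) : ~~ free [:: x + e *: c; y; z] -> x + e *: c \in <<[:: y; z]>>%VS.
  move=> /not_free3 [k0 [k1 [k2 [ek nk]]]].
  have k0n : k0 != 0.
    apply/eqP => k00; apply: nk; move: ek; rewrite k00 scale0r add0r => ek.
    by move/free2P: fyz => /(_ _ _ ek) [-> ->].
  apply/memv_span2P; exists (- (k1 / k0)), (- (k2 / k0)).
  apply: (scalerI k0n); rewrite [RHS]scalerDr !scalerA !mulrN !(mulrC k0) !divfK //.
  by apply/eqP; rewrite -subr_eq0 !scaleNr opprD !opprK addrA; apply/eqP.
have [f1|/in_span i1] := boolP (free [:: x + 1 *: c; y; z]).
  by exists 1; rewrite ?oner_eq0.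
have [f2|/in_span i2] := boolP (free [:: x + 2%:R *: c; y; z]).
  by exists 2%:R; rewrite ?pnatr_eq0.
have : x \in <<[:: y; z]>>%VS.
  have -> : x = 2%:R *: (x + 1 *: c) - (x + 2%:R *: c).
    by rewrite scale1r scalerDr opprD addrACA subrr addr0 scaler_nat mulr2n addrK.
  by rewrite memvB ?memvZ.
by move: fxyz; rewrite free_cons => /andP[/negP].
Qed.

Lemma free_map3 (K : fieldType) (V W : vectType K) (f : V -> W) :
  (forall x y, f (x + y) = f x + f y) -> (forall (r : K) x, f (r *: x) = r *: f x) ->
  (forall x, f x = 0 -> x = 0) ->
  forall a b c, free [:: a; b; c] -> free [:: f a; f b; f c].
Proof.
move=> fD fZ f0 a b c /free3P h; apply/free3P => r0 r1 r2 e.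
by apply: h; apply: f0; rewrite !fD !fZ.
Qed.

Lemma span_kernel_vector (K : fieldType) (V W : vectType K) (f : V -> W) :
  (forall x y, f (x + y) = f x + f y) -> (forall (r : K) x, f (r *: x) = r *: f x) ->
  forall a b c, free [:: a; b; c] -> ~~ free [:: f a; f b; f c] ->
  exists v, [/\ v \in <<[:: a; b; c]>>%VS, v != 0 & f v = 0].
Proof.
move=> fD fZ a b c /free3P fr /not_free3 [r0 [r1 [r2 [er nr]]]].
exists (r0 *: a + r1 *: b + r2 *: c); split; last by rewrite !fD !fZ.
  by apply/memv_span3P; exists r0, r1, r2.
by apply/eqP => /fr.
Qed.

Section RankNullity.
Variables (K : fieldType) (U W : vectType K).

Lemma ker_dim (f : {linear U -> W}) :
  (\dim {:U} <= \dim {:W} + \dim (lker (linfun f)))%N.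
Proof.
have := limg_ker_dim (linfun f) fullv; rewrite capfv => e.
by rewrite -{1}e addnC leq_add2r; apply: dimvS; exact: subvf.
Qed.

Lemma ker_nonzero (f : {linear U -> W}) :
  (\dim {:W} < \dim {:U})%N -> exists u, u != 0 /\ f u = 0.
Proof.
move=> hd; have hk := ker_dim f.
have nz : lker (linfun f) != 0%VS.
  rewrite -dimv_eq0 -lt0n -(ltn_add2l (\dim {:W})) addn0.
  exact: leq_trans hd hk.
exists (vpick (lker (linfun f))); split; first by rewrite vpick0.
by have := memv_pick (lker (linfun f)); rewrite memv_ker lfunE /= => /eqP.
Qed.

Lemma inj_onto (S : {vspace U}) (g : {linear U -> W}) :
  (\dim {:W} <= \dim S)%N -> (forall u, u \in S -> g u = 0 -> u = 0) ->
  forall t, exists2 u, u \in S & g u = t.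
Proof.
move=> hd hi t.
have h0 : (S :&: lker (linfun g) = 0)%VS.
  apply/eqP; rewrite -subv0; apply/subvP => u /memv_capP [uS].
  by rewrite memv_ker lfunE /= => /eqP /(hi _ uS) ->; rewrite memv0.
have hf : (linfun g @: S)%VS = fullv.
  by apply/eqP; rewrite eqEdim subvf /= limg_dim_eq.
have : t \in (linfun g @: S)%VS by rewrite hf memvf.
by case/memv_imgP => u uS ->; exists u => //; rewrite lfunE.
Qed.

End RankNullity.

Section Sandwich.
Variable R : realType.
Local Notation H := (quat R).

(* The sandwich map t |-> c0 t + c1 t i + c2 t j + c3 t k.  Averaging
   sandwich c t * conj u over u in the basis 1, i, j, k isolates 4 c0. *)
Definition sandwich (c0 c1 c2 c3 t : H) : H :=
  c0 * t * 1 + c1 * t * qI R + c2 * t * qJ R + c3 * t * qK R.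

Lemma sandwich_avg (c0 c1 c2 c3 : H) :
  sandwich c0 c1 c2 c3 1 - sandwich c0 c1 c2 c3 (qI R) * qI R
  - sandwich c0 c1 c2 c3 (qJ R) * qJ R - sandwich c0 c1 c2 c3 (qK R) * qK R
  = 4%:R *: c0.
Proof. rewrite /sandwich; qring. Qed.

Lemma sandwich_eq0_head (c0 c1 c2 c3 : H) :
  (forall t, sandwich c0 c1 c2 c3 t = 0) -> c0 = 0.
Proof.
move=> h; have /eqP := sandwich_avg c0 c1 c2 c3.
by rewrite !h !mul0r !subrr eq_sym scaler_eq0 pnatr_eq0 => /eqP.
Qed.

(* Hence the maps t |-> t e, for e in 1, i, j, k, are independent over left
   multiplication: H (x) H^op acts faithfully on H. *)
Lemma sandwich_eq0 (c0 c1 c2 c3 : H) :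
  (forall t, sandwich c0 c1 c2 c3 t = 0) -> [/\ c0 = 0, c1 = 0, c2 = 0 & c3 = 0].
Proof.
move=> h; split; first exact: sandwich_eq0_head h.
- apply: (@sandwich_eq0_head _ (- c0) (- c3) c2) => t.
  by rewrite -[RHS](mul0r (- qI R)) -(h t) /sandwich; qring.
- apply: (@sandwich_eq0_head _ c3 (- c0) (- c1)) => t.
  by rewrite -[RHS](mul0r (- qJ R)) -(h t) /sandwich; qring.
- apply: (@sandwich_eq0_head _ (- c2) c1 (- c0)) => t.
  by rewrite -[RHS](mul0r (- qK R)) -(h t) /sandwich; qring.
Qed.

Lemma sandwich_free_eq0 (a0 a1 a2 h0 h1 h2 : H) : free [:: a0; a1; a2] ->
  (forall t : H, a0 * t * h0 + a1 * t * h1 + a2 * t * h2 = 0) ->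
  [/\ h0 = 0, h1 = 0 & h2 = 0].
Proof.
move=> /free3P fr h.
pose coef (f : H -> R) := f h0 *: a0 + f h1 *: a1 + f h2 *: a2.
have [c0 c1 c2 c3] : [/\ coef (@q0 R) = 0, coef (@q1 R) = 0,
                         coef (@q2 R) = 0 & coef (@q3 R) = 0].
  apply: sandwich_eq0 => t; rewrite -(h t) /sandwich /coef; qring.
have [x0 y0 z0] := fr _ _ _ c0; have [x1 y1 z1] := fr _ _ _ c1.
have [x2 y2 z2] := fr _ _ _ c2; have [x3 y3 z3] := fr _ _ _ c3.
by split; apply: quat_eq.
Qed.

(* The mirror statement, obtained by quaternion conjugation. *)
Lemma sandwich_free_eq0_r (a0 a1 a2 h0 h1 h2 : H) : free [:: a0; a1; a2] ->
  (forall t : H, h0 * t * a0 + h1 * t * a1 + h2 * t * a2 = 0) ->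
  [/\ h0 = 0, h1 = 0 & h2 = 0].
Proof.
move=> fr h.
have frc : free [:: qconj a0; qconj a1; qconj a2].
  by apply: free_map3 fr; [exact: qconjD | exact: qconjZ | exact: qconj_eq0].
have [] := sandwich_free_eq0 (h0 := qconj h0) (h1 := qconj h1) (h2 := qconj h2) frc.
  move=> t; have := congr1 (@qconj R) (h (qconj t)).
  by rewrite !qconjD !qconjM qconjK !mulrA => ->; qring.
by move=> /qconj_eq0 -> /qconj_eq0 -> /qconj_eq0 ->.
Qed.

End Sandwich.

Lemma ord2P (i : 'I_2) : i = 0 \/ i = 1.
Proof. by case: i => [[|[|i]] hi] //; [left | right]; exact: val_inj. Qed.

Lemma ord3P (i : 'I_3) : [\/ i = 0, i = 1 | i = 2].
Proof.
by case: i => [[|[|[|i]]] hi] //; [constructor 1 | constructor 2 | constructor 3];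
  exact: val_inj.
Qed.

Section ExplicitVectors.
Variable T : Type.
Definition vec2 (x y : T) (i : 'I_2) : T := if i == 0 then x else y.
Definition vec3 (x y z : T) (l : 'I_3) : T :=
  if l == 0 then x else if l == 1 then y else z.
Lemma vec2_0 x y : vec2 x y 0 = x. Proof. by []. Qed.
Lemma vec2_1 x y : vec2 x y 1 = y. Proof. by []. Qed.
Lemma vec3_0 x y z : vec3 x y z 0 = x. Proof. by []. Qed.
Lemma vec3_1 x y z : vec3 x y z 1 = y. Proof. by []. Qed.
Lemma vec3_2 x y z : vec3 x y z 2 = z. Proof. by []. Qed.
End ExplicitVectors.

Section TwoByTwo.
Variable R : realType.
Local Notation H := (quat R).
Local Notation M2 := 'M[H]_2.

Lemma sum2 (f : 'I_2 -> H) : \sum_(i < 2) f i = f 0 + f 1.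
Proof. by rewrite !big_ord_recl big_ord0 addr0; congr (_ + f _); exact: val_inj. Qed.

Lemma sum3 (f : 'I_3 -> H) : \sum_(i < 3) f i = f 0 + f 1 + f 2.
Proof.
by rewrite !big_ord_recl big_ord0 addr0 addrA; congr (_ + f _ + f _); exact: val_inj.
Qed.

Definition mx2 (a b c d : H) : M2 := \matrix_(i, k) vec2 (vec2 a b k) (vec2 c d k) i.
Lemma mx2E00 a b c d : mx2 a b c d 0 0 = a. Proof. by rewrite mxE. Qed.
Lemma mx2E01 a b c d : mx2 a b c d 0 1 = b. Proof. by rewrite mxE. Qed.
Lemma mx2E10 a b c d : mx2 a b c d 1 0 = c. Proof. by rewrite mxE. Qed.
Lemma mx2E11 a b c d : mx2 a b c d 1 1 = d. Proof. by rewrite mxE. Qed.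
Lemma id2E00 : (1 : M2) 0 0 = 1. Proof. by rewrite mxE. Qed.
Lemma id2E01 : (1 : M2) 0 1 = 0. Proof. by rewrite mxE. Qed.
Lemma id2E10 : (1 : M2) 1 0 = 0. Proof. by rewrite mxE. Qed.
Lemma id2E11 : (1 : M2) 1 1 = 1. Proof. by rewrite mxE. Qed.

Lemma mulmx2E (A B : M2) i k : (A *m B) i k = A i 0 * B 0 k + A i 1 * B 1 k.
Proof. by rewrite mxE sum2. Qed.

Lemma matrix2P (A B : M2) :
  A 0 0 = B 0 0 -> A 0 1 = B 0 1 -> A 1 0 = B 1 0 -> A 1 1 = B 1 1 -> A = B.
Proof.
move=> h00 h01 h10 h11; apply/matrixP => i k.
by case: (ord2P i) => ->; case: (ord2P k) => ->.
Qed.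

End TwoByTwo.

Ltac mx2simp := rewrite ?(mulmx2E, mx2E00, mx2E01, mx2E10, mx2E11,
  id2E00, id2E01, id2E10, id2E11, mul1r, mulr1, mul0r, mulr0, addr0, add0r,
  mulNr, mulrN, subrr, addNr).
Ltac mx2inv := apply: matrix2P; mx2simp;
  rewrite ?mulrA ?mulVr ?mulrV ?mul1r ?mulr1 ?subrr ?addrN ?addNr.

Section InvertibleCompletion.
Variable R : realType.
Local Notation H := (quat R).
Local Notation M2 := 'M[H]_2.

Lemma pair_neq0 (x : H * H) : x != 0 -> x.1 != 0 \/ x.2 != 0.
Proof.
case: x => a b /=; case: (eqVneq a 0) => [->|]; last by left.
by case: (eqVneq b 0) => [->|]; [rewrite eqxx | right].
Qed.

Definition swap2 : M2 := mx2 0 1 1 0.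
Lemma swap2K : swap2 *m swap2 = 1. Proof. by apply: matrix2P; rewrite /swap2; mx2simp. Qed.

Lemma complete_row0 (x : H * H) : x != 0 ->
  exists X X' : M2, [/\ X' *m X = 1, X 0 0 = x.1 & X 0 1 = x.2].
Proof.
case: x => x1 x2 /pair_neq0 /= [h|h]; rewrite -qunitE in h.
  by exists (mx2 x1 x2 0 1), (mx2 x1^-1 (- (x1^-1 * x2)) 0 1); split; mx2simp => //; mx2inv.
by exists (mx2 x1 x2 1 0), (mx2 0 1 x2^-1 (- (x2^-1 * x1))); split; mx2simp => //; mx2inv.
Qed.

Lemma complete_row1 (x : H * H) : x != 0 ->
  exists X X' : M2, [/\ X' *m X = 1, X 1 0 = x.1 & X 1 1 = x.2].
Proof.
case/complete_row0 => X [X' [hX h0 h1]].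
exists (swap2 *m X), (X' *m swap2); split; last by rewrite /swap2; mx2simp.
  by rewrite mulmxA -(mulmxA X') swap2K mulmx1.
by rewrite /swap2; mx2simp.
Qed.

Lemma complete_col0 (w : H * H) : w != 0 ->
  exists Z Z' : M2, [/\ Z *m Z' = 1, Z 0 0 = w.1 & Z 1 0 = w.2].
Proof.
case: w => w1 w2 /pair_neq0 /= [h|h]; rewrite -qunitE in h.
  by exists (mx2 w1 0 w2 1), (mx2 w1^-1 0 (- (w2 * w1^-1)) 1); split; mx2simp => //; mx2inv.
by exists (mx2 w1 1 w2 0), (mx2 0 w2^-1 1 (- (w1 * w2^-1))); split; mx2simp => //; mx2inv.
Qed.

Lemma complete_col1 (w : H * H) : w != 0 ->
  exists Z Z' : M2, [/\ Z *m Z' = 1, Z 0 1 = w.1 & Z 1 1 = w.2].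
Proof.
case/complete_col0 => Z [Z' [hZ h0 h1]].
exists (Z *m swap2), (swap2 *m Z'); split; last by rewrite /swap2; mx2simp.
  by rewrite mulmxA -(mulmxA Z) swap2K mulmx1.
by rewrite /swap2; mx2simp.
Qed.

Lemma mulmx3E (X M Z : M2) r s : (X *m M *m Z) r s =
  (X r 0 * M 0 0 + X r 1 * M 1 0) * Z 0 s + (X r 0 * M 0 1 + X r 1 * M 1 1) * Z 1 s.
Proof. by rewrite !mulmx2E. Qed.

End InvertibleCompletion.

Section ThreeTermDecomposition.
Variable R : realType.
Local Notation H := (quat R).
Local Notation M2 := 'M[H]_2.

Definition decomp3 (M : 'I_3 -> M2) :=
  exists (a c : 'I_3 -> 'I_2 -> H) (q : 'I_3 -> 'I_3 -> H),
    forall j i k, M j i k = \sum_(l < 3) a l i * q l j * c l k.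

Lemma decomp3_ext (M M' : 'I_3 -> M2) :
  (forall j, M j = M' j) -> decomp3 M' -> decomp3 M.
Proof. by move=> e [a [c [q h]]]; exists a, c, q => j i k; rewrite e h. Qed.

Lemma decomp3_perm (M : 'I_3 -> M2) (s : 'I_3 -> 'I_3) :
  decomp3 M -> decomp3 (M \o s).
Proof. by case=> a [c [q h]]; exists a, c, (fun l j => q l (s j)) => j i k /=; rewrite h. Qed.

Lemma decomp3_mul (M N : 'I_3 -> M2) (P Q : M2) :
  decomp3 N -> (forall j, M j = P *m N j *m Q) -> decomp3 M.
Proof.
case=> a [c [q hN]] hM.
exists (fun l i => \sum_(i' < 2) P i i' * a l i'),
       (fun l k => \sum_(k' < 2) c l k' * Q k' k), q => j i k.
rewrite hM.
transitivity (\sum_(i' < 2) \sum_(k' < 2) \sum_(l < 3)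
                P i i' * a l i' * q l j * c l k' * Q k' k).
  rewrite -mulmxA mxE; apply: eq_bigr => i' _; rewrite mxE mulr_sumr.
  apply: eq_bigr => k' _.
  by rewrite hN mulr_suml mulr_sumr; apply: eq_bigr => l _; rewrite !mulrA.
transitivity (\sum_(l < 3) \sum_(i' < 2) \sum_(k' < 2)
                P i i' * a l i' * q l j * c l k' * Q k' k).
  by rewrite [RHS]exchange_big /=; apply: eq_bigr => i' _; rewrite exchange_big.
apply: eq_bigr => l _; rewrite mulr_suml big_distrlr /=.
by apply: eq_bigr => i' _; apply: eq_bigr => k' _; rewrite !mulrA.
Qed.

Lemma decomp3_equiv (M : 'I_3 -> M2) (X X' Z Z' : M2) :
  X' *m X = 1 -> Z *m Z' = 1 -> decomp3 (fun j => X *m M j *m Z) -> decomp3 M.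
Proof.
move=> hX hZ hD; apply: (decomp3_mul (P := X') (Q := Z') hD) => j.
by rewrite /= !mulmxA hX mul1mx -!mulmxA hZ mulmx1.
Qed.

Local Ltac vecsimp := rewrite ?(vec2_0, vec2_1, vec3_0, vec3_1, vec3_2,
  mul1r, mulr1, mul0r, mulr0, addr0, add0r).

Lemma decomp3_upper (N : 'I_3 -> M2) : (forall j, N j 1 0 = 0) -> decomp3 N.
Proof.
move=> h.
exists (vec3 (vec2 1 0) (vec2 1 0) (vec2 0 1)), (vec3 (vec2 1 0) (vec2 0 1) (vec2 0 1)),
  (vec3 (fun j => N j 0 0) (fun j => N j 0 1) (fun j => N j 1 1)) => j i k.
by rewrite sum3; case: (ord2P i) => ->; case: (ord2P k) => ->; vecsimp; rewrite ?h.
Qed.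

Lemma decomp3_lower (N : 'I_3 -> M2) : (forall j, N j 0 1 = 0) -> decomp3 N.
Proof.
move=> h.
exists (vec3 (vec2 1 0) (vec2 0 1) (vec2 0 1)), (vec3 (vec2 1 0) (vec2 1 0) (vec2 0 1)),
  (vec3 (fun j => N j 0 0) (fun j => N j 1 0) (fun j => N j 1 1)) => j i k.
by rewrite sum3; case: (ord2P i) => ->; case: (ord2P k) => ->; vecsimp; rewrite ?h.
Qed.

Lemma decomp3_sym (N : 'I_3 -> M2) : (forall j, N j 0 1 = N j 1 0) -> decomp3 N.
Proof.
move=> h.
exists (vec3 (vec2 1 0) (vec2 0 1) (vec2 1 1)), (vec3 (vec2 1 0) (vec2 0 1) (vec2 1 1)),
  (vec3 (fun j => N j 0 0 - N j 0 1) (fun j => N j 1 1 - N j 0 1) (fun j => N j 0 1)).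
move=> j i k; rewrite sum3.
by case: (ord2P i) => ->; case: (ord2P k) => ->; vecsimp; rewrite ?subrK ?h.
Qed.

(* A diagonal slice, an arbitrary slice and a zero slice.  With p, q the
   off-diagonal entries of the second slice, write p = z b and q = a z
   (z = p, or z = q when p = 0). *)
Lemma decomp3_diag (N : 'I_3 -> M2) :
  N 0 0 1 = 0 -> N 0 1 0 = 0 -> (forall i k, N 2 i k = 0) -> decomp3 N.
Proof.
move=> h01 h10 h2.
pose p := N 1 0 1; pose q' := N 1 1 0.
pose al := if p != 0 then q' * p^-1 else 1.
pose z := if p != 0 then p else q'.
pose be : H := if p != 0 then 1 else 0.
have e01 : z * be = p by rewrite /z /be; case: (eqVneq p 0) => [->|]; vecsimp.
have e10 : al * z = q'.
  by rewrite /z /al; case: (eqVneq p 0) => [_|hp]; vecsimp; rewrite // mulrVK // qunitE.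
exists (vec3 (vec2 1 0) (vec2 0 1) (vec2 1 al)), (vec3 (vec2 1 0) (vec2 0 1) (vec2 1 be)),
  (vec3 (vec3 (N 0 0 0) (N 1 0 0 - z) 0) (vec3 (N 0 1 1) (N 1 1 1 - al * z * be) 0)
        (vec3 0 z 0)).
move=> j i k; rewrite sum3.
case: (ord3P j) => ->; case: (ord2P i) => ->; case: (ord2P k) => ->; vecsimp;
  rewrite ?h2 ?h01 ?h10 ?subrK ?e01 ?e10 //.
all: by rewrite addrC subrK.
Qed.

(* Two slices and a zero one (the 2x2x2 case): a nonzero entry of A is moved
   to position (0,0) and used as a pivot to clear its row and column. *)
Lemma decomp3_pivot00 (A B : M2) : A 0 0 != 0 -> decomp3 (vec3 A B 0).
Proof.
move=> hA; rewrite -qunitE in hA; set a := A 0 0 in hA *.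
apply: (@decomp3_equiv _ (mx2 1 0 (- (A 1 0 * a^-1)) 1) (mx2 1 0 (A 1 0 * a^-1) 1)
          (mx2 1 (- (a^-1 * A 0 1)) 0 1) (mx2 1 (a^-1 * A 0 1) 0 1)).
- by apply: matrix2P; mx2simp; rewrite ?addNr ?addrN.
- by apply: matrix2P; mx2simp; rewrite ?addNr ?addrN.
apply: decomp3_diag => /=; rewrite ?vec3_0 ?vec3_2.
- by rewrite mulmx3E; mx2simp; rewrite mulrA /a mulrV // mul1r addNr.
- by rewrite mulmx3E; mx2simp; rewrite -mulrA /a mulVr // mulr1 addNr.
- by move=> i k; rewrite mulmx0 mul0mx mxE.
Qed.

Lemma decomp3_pivot (A B : M2) : A != 0 -> decomp3 (vec3 A B 0).
Proof.
move=> nA.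
have [r [s hrs]] : exists r s, A r s != 0.
  apply: NNPP => h; move/eqP: nA; apply; apply/matrixP => i k; rewrite mxE.
  by apply: NNPP => /eqP hik; apply: h; exists i, k.
pose P : M2 := if r == 0 then 1 else swap2 R.
pose Q : M2 := if s == 0 then 1 else swap2 R.
have PP : P *m P = 1 by rewrite /P; case: ifP => _; rewrite ?mulmx1 ?swap2K.
have QQ : Q *m Q = 1 by rewrite /Q; case: ifP => _; rewrite ?mulmx1 ?swap2K.
apply: (decomp3_equiv PP QQ).
apply: (@decomp3_ext _ (vec3 (P *m A *m Q) (P *m B *m Q) 0)).
  by move=> j; case: (ord3P j) => ->; rewrite /= ?vec3_0 ?vec3_1 ?vec3_2 ?mulmx0 ?mul0mx.
apply: decomp3_pivot00; rewrite mulmx3E /P /Q.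
by case: (ord2P r) hrs => ->; case: (ord2P s) => -> /=; rewrite /swap2; mx2simp.
Qed.

Lemma decomp3_two_slices (A B : M2) : decomp3 (vec3 A B 0).
Proof.
have [-> | nA] := eqVneq A 0; last exact: decomp3_pivot.
have [-> | nB] := eqVneq B 0.
  exists (fun _ _ => 0), (fun _ _ => 0), (fun _ _ => 0) => j i k.
  rewrite sum3 !mul0r !addr0.
  by case: (ord3P j) => ->; rewrite ?vec3_0 ?vec3_1 ?vec3_2 mxE.
apply: (@decomp3_ext _ (vec3 B 0 0 \o vec3 1 0 2)); first by move=> j; case: (ord3P j) => ->.
exact/decomp3_perm/decomp3_pivot.
Qed.

Lemma decomp3_dependent (M : 'I_3 -> M2) (r0 r1 r2 : R) : r2 != 0 ->
  (forall i k, r0 *: M 0 i k + r1 *: M 1 i k + r2 *: M 2 i k = 0) -> decomp3 M.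
Proof.
move=> n2 rel; set e0 := - (r0 / r2); set e1 := - (r1 / r2).
have hM2 i k : M 2 i k = e0 *: M 0 i k + e1 *: M 1 i k.
  apply: (scalerI n2); rewrite scalerDr !scalerA !mulrN !(mulrC r2) !divfK //.
  apply/eqP; rewrite -subr_eq0 !scaleNr opprD !opprK addrC ?addrA; apply/eqP; exact: rel.
have [a [c [q h]]] := decomp3_two_slices (M 0) (M 1).
exists a, c, (fun l j => if j == 2 then e0 *: q l 0 + e1 *: q l 1 else q l j).
move=> j i k; case: (ord3P j) => -> /=.
- exact: h 0 i k.
- exact: h 1 i k.
- by rewrite hM2 (h 0 i k) (h 1 i k) !sum3; qring.
Qed.

End ThreeTermDecomposition.

Section RightModule.
Variable R : realType.
Local Notation H := (quat R).
Variable Y : vectType R.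
Variable act : Y -> H -> Y.
Hypothesis actDl : forall p y z, act (y + z) p = act y p + act z p.
Hypothesis actZl : forall p (r : R) y, act (r *: y) p = r *: act y p.
Hypothesis actDr : forall y p q, act y (p + q) = act y p + act y q.
Hypothesis actZr : forall y (r : R) p, act y (r *: p) = r *: act y p.
Hypothesis act1 : forall y, act y 1 = y.
Hypothesis actA : forall y p q, act (act y p) q = act y (p * q).

Lemma act0r y : act y 0 = 0.
Proof. by have := actZr y 0 0; rewrite !scale0r. Qed.

Lemma act0l p : act 0 p = 0.
Proof. by have := actZl p 0 0; rewrite !scale0r. Qed.

Lemma act_eq0 y p : p != 0 -> act y p = 0 -> y = 0.
Proof. by move=> hp e; rewrite -[y]act1 -(@mulrV _ p) ?qunitE // -actA e act0l. Qed.

Lemma act_basis_free y : y != 0 ->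
  free [:: act y 1; act y (qI R); act y (qJ R); act y (qK R)].
Proof.
move=> ny; apply/free4P => r0 r1 r2 r3 e.
apply: quat_basis_coord; apply: NNPP => /eqP hp; move/eqP: ny; apply.
by apply: act_eq0 hp _; rewrite !actDr !actZr.
Qed.

Lemma act_basis_notin y (a b : Y) : y != 0 ->
  exists2 e : H, e != 0 & act y e \notin <<[:: a; b]>>%VS.
Proof.
move=> ny; apply: NNPP => hn.
suff sub : {subset [:: act y 1; act y (qI R); act y (qJ R); act y (qK R)]
              <= <<[:: a; b]>>%VS} by have := free_in_span2 (act_basis_free ny) sub.
move=> v; rewrite !inE => /or4P [] /eqP ->; apply: NNPP => /negP nin; apply: hn.
- by exists 1; rewrite ?oner_eq0.
- by exists (qI R); rewrite ?qI_neq0.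
- by exists (qJ R); rewrite ?qJ_neq0.
- by exists (qK R); rewrite ?qK_neq0.
Qed.

Definition mix (s1 s2 : H) (y : Y * Y) : Y := act y.1 s1 + act y.2 s2.

Lemma mixD s1 s2 y z : mix s1 s2 (y + z) = mix s1 s2 y + mix s1 s2 z.
Proof. by rewrite /mix /= !actDl addrACA. Qed.

Lemma mixZ s1 s2 (r : R) y : mix s1 s2 (r *: y) = r *: mix s1 s2 y.
Proof. by rewrite /mix /= !actZl scalerDr. Qed.

Lemma mix_axes s1 s2 (A B : Y) : mix s1 s2 (A, 0) = act A s1 /\ mix s1 s2 (0, B) = act B s2.
Proof. by rewrite /mix /= !act0l addr0 add0r. Qed.

Lemma mix_free_span (u0 u1 u2 y0 y1 y2 : Y * Y) s1 s2 :
  free [:: u0; u1; u2] -> free [:: y0; y1; y2] ->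
  {subset [:: y0; y1; y2] <= <<[:: u0; u1; u2]>>%VS} ->
  free [:: mix s1 s2 y0; mix s1 s2 y1; mix s1 s2 y2] ->
  free [:: mix s1 s2 u0; mix s1 s2 u1; mix s1 s2 u2].
Proof.
move=> fu fy sub fp; apply/free3P => k0 k1 k2 e.
set v := k0 *: u0 + k1 *: u1 + k2 *: u2.
have eqs : (<<[:: y0; y1; y2]>> = <<[:: u0; u1; u2]>>)%VS.
  apply/eqP; rewrite eqEdim; apply/andP; split; first exact/span_subvP.
  by rewrite (eqP fy) (eqP fu).
have /memv_span3P [m0 [m1 [m2 ev]]] : v \in <<[:: y0; y1; y2]>>%VS.
  by rewrite eqs; apply/memv_span3P; exists k0, k1, k2.
have /(free3P _ _ _ fp) [z0 z1 z2] :
    m0 *: mix s1 s2 y0 + m1 *: mix s1 s2 y1 + m2 *: mix s1 s2 y2 = 0.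
  by rewrite -!mixZ -!mixD -ev /v !mixD !mixZ.
by apply: (free3P _ _ _ fu); rewrite -/v ev z0 z1 z2 !scale0r !addr0.
Qed.

Lemma pair_eqP (x y : Y * Y) : x.1 = y.1 -> x.2 = y.2 -> x = y.
Proof. by case: x => ? ?; case: y => ? ? /= -> ->. Qed.

Lemma mix_free_dependent (A B C D : Y) (rho : R) : B != 0 -> D = rho *: B ->
  free [:: (C, D); (A, 0); (0, B)] ->
  exists s1 s2, free [:: mix s1 s2 (C, D); mix s1 s2 (A, 0); mix s1 s2 (0, B)].
Proof.
move=> nB eD /free3P fy.
have fAC : free [:: A; C].
  apply/free2P => a c e.
  suff [-> -> _] : [/\ c = 0, a = 0 & - (c * rho) = 0] by [].
  apply: fy; apply: pair_eqP => /=; first by rewrite scaler0 addr0 addrC.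
  by rewrite scaler0 addr0 eD scalerA scaleNr addrN.
have [e ne notin] := act_basis_notin A C nB.
exists 1, e; have [-> ->] := mix_axes 1 e A B.
rewrite /mix /= !act1 eD actZl; apply: free_shear.
by rewrite free_cons notin fAC.
Qed.

(* The normalized triple (C, D), (A, 0), (0, B) when B, D are independent:
   first find p with A outside the span of B p and D p. *)
Lemma mix_free_independent (A B C D : Y) : A != 0 -> free [:: B; D] ->
  exists s1 s2, free [:: mix s1 s2 (C, D); mix s1 s2 (A, 0); mix s1 s2 (0, B)].
Proof.
move=> nA fBD.
have [e ne notin] := act_basis_notin B D nA.
have ue : e \is a GRing.unit by rewrite qunitE.
set p := e^-1; have np : p != 0 by rewrite -qunitE unitrV.
have ApBD : A \notin <<[:: act B p; act D p]>>%VS.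
  apply: contra notin => /memv_span2P [a [b ->]]; apply/memv_span2P; exists a, b.
  by rewrite actDl !actZl !actA mulVr // !act1.
have fBDp : free [:: act B p; act D p].
  apply/free2P => a b ab; apply: (free2P _ _ fBD); apply: (act_eq0 np).
  by rewrite actDl !actZl.
have f3 : free (rot 2 [:: A; act B p; act D p]).
  by rewrite (perm_free (Y := [:: A; act B p; act D p])) ?perm_rot // free_cons ApBD fBDp.
have [eps neps feps] := free_perturb C f3.
exists 1, (eps^-1 *: p); have [-> ->] := mix_axes 1 (eps^-1 *: p) A B.
by rewrite /mix /= !act1 !actZr; exact: free_unshear neps feps.
Qed.

Lemma mix_free_normal (A B C D : Y) : A != 0 -> B != 0 ->
  free [:: (C, D); (A, 0); (0, B)] ->
  exists s1 s2, free [:: mix s1 s2 (C, D); mix s1 s2 (A, 0); mix s1 s2 (0, B)].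
Proof.
move=> nA nB fy; have [fBD|] := boolP (free [:: B; D]).
  exact: mix_free_independent.
move=> /not_free2 [k0 [k1 [ek nk]]].
have k1n : k1 != 0.
  apply/eqP => k10; apply: nk; split => //; move/eqP: ek.
  by rewrite k10 scale0r addr0 scaler_eq0 (negPf nB) orbF => /eqP.
apply: (mix_free_dependent (rho := - (k0 / k1)) nB _ fy).
apply: (scalerI k1n); rewrite scalerA mulrN mulrCA mulfV // mulr1 scaleNr.
by apply/eqP; rewrite -addr_eq0 addrC ek.
Qed.

Lemma exists_mix_free (u0 u1 u2 : Y * Y) : free [:: u0; u1; u2] ->
  exists s1 s2, free [:: mix s1 s2 u0; mix s1 s2 u1; mix s1 s2 u2].
Proof.
move=> fu.
have [f2|nf2] := boolP (free [:: u0.2; u1.2; u2.2]).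
  by exists 0, 1; rewrite /mix !act0r !act1 !add0r.
have [f1|nf1] := boolP (free [:: u0.1; u1.1; u2.1]).
  by exists 1, 0; rewrite /mix !act0r !act1 !addr0.
have [ya [yaU nya ya2]] := span_kernel_vector (fun _ _ => erefl) (fun _ _ => erefl) fu nf2.
have [yb [ybU nyb yb1]] := span_kernel_vector (fun _ _ => erefl) (fun _ _ => erefl) fu nf1.
move: ya yb ya2 yb1 nya nyb yaU ybU => [A A'] [B' B] /= -> -> nA nB yaU ybU.
have {}nA : A != 0 by apply: contraNneq nA => ->.
have {}nB : B != 0 by apply: contraNneq nB => ->.
have fAB : free [:: (A, 0); (0, B)].
  apply/free2P => a b /[dup] /(congr1 fst) /= /eqP e1 /(congr1 snd) /= /eqP e2.
  move: e1 e2; rewrite !scaler0 addr0 add0r !scaler_eq0 (negPf nA) (negPf nB) !orbF.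
  by move=> /eqP -> /eqP ->.
have [[C D] yU ynot] : exists2 y, y \in [:: u0; u1; u2] &
    y \notin <<[:: (A, 0%R); (0%R, B)]>>%VS.
  apply: NNPP => h.
  suff sub : {subset [:: u0; u1; u2] <= <<[:: (A, 0%R); (0%R, B)]>>%VS}.
    by have := free_in_span2 fu sub.
  by move=> y yU; apply: NNPP => /negP ny; apply: h; exists y.
have fy : free [:: (C, D); (A, 0); (0, B)] by rewrite free_cons ynot fAB.
have [s1 [s2 fs]] := mix_free_normal nA nB fy.
exists s1, s2; apply: mix_free_span fu fy _ fs => y.
by rewrite !inE => /or3P [] /eqP -> //; apply: memv_span.
Qed.

End RightModule.

Section CornerNormalization.
Variable R : realType.
Local Notation H := (quat R).
Local Notation M2 := 'M[H]_2.

Definition act_pair (y : H * H) (p : H) : H * H := (y.1 * p, y.2 * p).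

Lemma act_pairDl p (y z : H * H) : act_pair (y + z) p = act_pair y p + act_pair z p.
Proof. by rewrite /act_pair /= !mulrDl. Qed.
Lemma act_pairZl p (r : R) (y : H * H) : act_pair (r *: y) p = r *: act_pair y p.
Proof. by rewrite /act_pair /= -!scalerAl. Qed.
Lemma act_pairDr (y : H * H) p q : act_pair y (p + q) = act_pair y p + act_pair y q.
Proof. by rewrite /act_pair /= !mulrDr. Qed.
Lemma act_pairZr (y : H * H) (r : R) p : act_pair y (r *: p) = r *: act_pair y p.
Proof. by rewrite /act_pair /= -!qscaleAr. Qed.
Lemma act_pair1 (y : H * H) : act_pair y 1 = y.
Proof. by rewrite /act_pair !mulr1; case: y. Qed.
Lemma act_pairA (y : H * H) p q : act_pair (act_pair y p) q = act_pair y (p * q).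
Proof. by rewrite /act_pair /= !mulrA. Qed.

Definition act_conj (y p : H) : H := qconj p * y.

Lemma act_conjDl p (y z : H) : act_conj (y + z) p = act_conj y p + act_conj z p.
Proof. exact: mulrDr. Qed.
Lemma act_conjZl p (r : R) (y : H) : act_conj (r *: y) p = r *: act_conj y p.
Proof. by rewrite /act_conj qscaleAr. Qed.
Lemma act_conjDr (y : H) p q : act_conj y (p + q) = act_conj y p + act_conj y q.
Proof. by rewrite /act_conj qconjD mulrDl. Qed.
Lemma act_conjZr (y : H) (r : R) p : act_conj y (r *: p) = r *: act_conj y p.
Proof. by rewrite /act_conj qconjZ scalerAl. Qed.
Lemma act_conj1 (y : H) : act_conj y 1 = y.
Proof. by rewrite /act_conj qconj1 mul1r. Qed.
Lemma act_conjA (y : H) p q : act_conj (act_conj y p) q = act_conj y (p * q).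
Proof. by rewrite /act_conj qconjM mulrA. Qed.

Definition columns (M : M2) : (H * H) * (H * H) := ((M 0 0, M 1 0), (M 0 1, M 1 1)).

(* If the three slices are R-independent, then after an invertible change of
   rows and of columns their (0,0) entries are R-independent: first combine
   the columns with the right factors s1, s2, then the rows with the left
   factors conj t1, conj t2. *)
Lemma normalize_corner (M : 'I_3 -> M2) :
  free [:: columns (M 0); columns (M 1); columns (M 2)] ->
  exists X X' Z Z' : M2, [/\ X' *m X = 1, Z *m Z' = 1 &
    free [:: (X *m M 0 *m Z) 0 0; (X *m M 1 *m Z) 0 0; (X *m M 2 *m Z) 0 0]].
Proof.
move=> fu.
have [s1 [s2 fA]] := exists_mix_free act_pairDl act_pairZl act_pairDr act_pairZr
  act_pair1 act_pairA fu.
have [t1 [t2 fB]] := exists_mix_free act_conjDl act_conjZl act_conjDr act_conjZr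
  act_conj1 act_conjA fA.
have nw : (s1, s2) != 0.
  apply: contra_neq (free_not0 fA (mem_head _ _)) => e.
  move: (congr1 fst e) (congr1 snd e) => /= -> ->.
  by rewrite /mix /act_pair /= !mulr0 addr0.
have nx : (qconj t1, qconj t2) != 0.
  apply: contra_neq (free_not0 fB (mem_head _ _)) => e; rewrite /mix /act_conj.
  by move: (congr1 fst e) (congr1 snd e) => /= -> ->; rewrite !mul0r addr0.
have [X [X' [hX hX0 hX1]]] := complete_row0 nx.
have [Z [Z' [hZ hZ0 hZ1]]] := complete_col0 nw.
exists X, X', Z, Z'; split => //.
suff corner j : (X *m M j *m Z) 0 0 =
    mix act_conj t1 t2 (mix act_pair s1 s2 (columns (M j))) by rewrite !corner.
rewrite mulmx3E hX0 hX1 hZ0 hZ1 /mix /act_conj /act_pair /=.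
by rewrite !mulrDl !mulrDr !mulrA addrACA.
Qed.

End CornerNormalization.

Section IndependentCorners.
Variable R : realType.
Local Notation H := (quat R).
Local Notation M2 := 'M[H]_2.
Local Notation U4 := ((H * H) * (H * H))%type.
Local Notation U3 := ((H * H) * H)%type.
Local Notation U2 := (H * H)%type.
Variable N : 'I_3 -> M2.

(* If a nonzero row vector x kills the first columns of all slices, then
   changing rows to make x the second row yields upper triangular slices. *)
Lemma decomp3_row_kernel (x : H * H) :
  x != 0 -> (forall j, x.1 * N j 0 0 + x.2 * N j 1 0 = 0) -> decomp3 N.
Proof.
move=> nx hx; have [X [X' [hX hX0 hX1]]] := complete_row1 nx.
apply: (decomp3_equiv hX (mulmx1 1)); apply: decomp3_upper => j /=.
by rewrite mulmx1 mulmx2E hX0 hX1 hx.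
Qed.

Lemma decomp3_col_kernel (w : H * H) :
  w != 0 -> (forall j, N j 0 0 * w.1 + N j 0 1 * w.2 = 0) -> decomp3 N.
Proof.
move=> nw hw; have [Z [Z' [hZ hZ0 hZ1]]] := complete_col1 nw.
apply: (decomp3_equiv (mulmx1 1) hZ); apply: decomp3_lower => j /=.
by rewrite mul1mx mulmx2E hZ0 hZ1 hw.
Qed.

(* For u = ((x, y), (z, t)), with X = [[1, 0], [x, y]] and Z = [[1, z], [0, t]],
   defect u j is the asymmetry (X N_j Z)_01 - (X N_j Z)_10. *)
Definition defect (u : U4) (j : 'I_3) : H :=
  N j 0 0 * u.2.1 + N j 0 1 * u.2.2 - (u.1.1 * N j 0 0 + u.1.2 * N j 1 0).
Definition defect_map (u : U4) : U3 := ((defect u 0, defect u 1), defect u 2).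

Lemma defect_map_linear : linear defect_map.
Proof.
move=> a [[x1 x2] [x3 x4]] [[y1 y2] [y3 y4]].
by rewrite /defect_map /defect /=; congr ((_, _), _); qring.
Qed.
HB.instance Definition _ := GRing.isLinear.Build R U4 U3 *:%R defect_map defect_map_linear.

Local Notation K := (lker (linfun defect_map)).

Lemma defect_ker u : u \in K -> forall j, defect u j = 0.
Proof.
rewrite memv_ker lfunE /= => /eqP h j.
move: (congr1 (fun p : U3 => p.1.1) h) (congr1 (fun p : U3 => p.1.2) h)
      (congr1 (fun p : U3 => p.2) h) => /= h0 h1 h2.
by case: (ord3P j) => ->.
Qed.

(* The kernel has dimension at least 16 - 12 = 4. *)
Lemma defect_ker_dim : (4 <= \dim K)%N.
Proof. by have := ker_dim defect_map; rewrite !dimvf. Qed.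

Definition proj_z (u : U4) : H := u.2.1.
Lemma proj_z_linear : linear proj_z. Proof. by move=> a [[? ?] [? ?]] [[? ?] [? ?]]. Qed.
HB.instance Definition _ := GRing.isLinear.Build R U4 H *:%R proj_z proj_z_linear.

Definition proj_x (u : U4) : H := u.1.1.
Lemma proj_x_linear : linear proj_x. Proof. by move=> a [[? ?] [? ?]] [[? ?] [? ?]]. Qed.
HB.instance Definition _ := GRing.isLinear.Build R U4 H *:%R proj_x proj_x_linear.

Definition col_combo (h : U3) : U2 :=
  (N 0 0 0 * h.1.1 + N 1 0 0 * h.1.2 + N 2 0 0 * h.2,
   N 0 1 0 * h.1.1 + N 1 1 0 * h.1.2 + N 2 1 0 * h.2).
Lemma col_combo_linear : linear col_combo.
Proof. by move=> a [[? ?] ?] [[? ?] ?]; rewrite /col_combo /=; congr (_, _); qring. Qed.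
HB.instance Definition _ := GRing.isLinear.Build R U3 U2 *:%R col_combo col_combo_linear.

Definition row_combo (g : U3) : U2 :=
  (g.1.1 * N 0 0 0 + g.1.2 * N 1 0 0 + g.2 * N 2 0 0,
   g.1.1 * N 0 0 1 + g.1.2 * N 1 0 1 + g.2 * N 2 0 1).
Lemma row_combo_linear : linear row_combo.
Proof. by move=> a [[? ?] ?] [[? ?] ?]; rewrite /row_combo /=; congr (_, _); qring. Qed.
HB.instance Definition _ := GRing.isLinear.Build R U3 U2 *:%R row_combo row_combo_linear.

Hypothesis corner_free : free [:: N 0 0 0; N 1 0 0; N 2 0 0].
Hypothesis no_row_kernel :
  ~ exists x : H * H, x != 0 /\ forall j, x.1 * N j 0 0 + x.2 * N j 1 0 = 0.
Hypothesis no_col_kernel :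
  ~ exists w : H * H, w != 0 /\ forall j, N j 0 0 * w.1 + N j 0 1 * w.2 = 0.

(* Some u in the kernel has t != 0.  Otherwise z would be an injective, hence
   onto, map from K to H, so N_j00 t = x N_j00 + y N_j10 for every t; a nonzero
   h with col_combo h = 0 would then make t |-> sum_j N_j00 t h_j vanish. *)
Lemma defect_ker_t : exists2 u, u \in K & u.2.2 != 0.
Proof.
apply: NNPP => hn.
have t0 u : u \in K -> u.2.2 = 0 by move=> uK; apply: NNPP => /eqP h; apply: hn; exists u.
have onto : forall z, exists2 u, u \in K & proj_z u = z.
  apply: inj_onto; first by rewrite dimvf; exact: defect_ker_dim.
  move=> [[x y] [z t]] uK z0; have {}z0 : z = 0 := z0; have /= t0' := t0 _ uK.
  suff [-> ->] : x = 0 /\ y = 0 by rewrite z0 t0'.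
  apply: NNPP => nxy; apply: no_row_kernel; exists (x, y); split.
    by apply/eqP => e; apply: nxy; split; [exact: (congr1 fst e) | exact: (congr1 snd e)].
  move=> j /=; have /eqP := defect_ker uK j.
  by rewrite /defect /= z0 t0' !mulr0 addr0 sub0r oppr_eq0 => /eqP.
have [[[h0 h1] h2] [nh hh]] : exists h, h != 0 /\ col_combo h = 0.
  by apply: ker_nonzero; rewrite !dimvf.
move: (congr1 fst hh) (congr1 snd hh) => /= hh0 hh1.
suff [z0 z1 z2] : [/\ h0 = 0, h1 = 0 & h2 = 0] by move: nh; rewrite z0 z1 z2 eqxx.
apply: (sandwich_free_eq0 corner_free) => z.
have [[[x y] [z' t]] uK zE] := onto z; have {}zE : z' = z := zE; rewrite -zE.
have ej j : N j 0 0 * z' = x * N j 0 0 + y * N j 1 0.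
  have /= t0' := t0 _ uK.
  by apply/eqP; rewrite -subr_eq0 -(defect_ker uK j) /defect /= t0' mulr0 addr0.
rewrite !ej; transitivity (x * (N 0 0 0 * h0 + N 1 0 0 * h1 + N 2 0 0 * h2) +
                           y * (N 0 1 0 * h0 + N 1 1 0 * h1 + N 2 1 0 * h2)).
  by qring.
by rewrite hh0 hh1 !mulr0 addr0.
Qed.

Lemma defect_ker_y : exists2 u, u \in K & u.1.2 != 0.
Proof.
apply: NNPP => hn.
have y0 u : u \in K -> u.1.2 = 0 by move=> uK; apply: NNPP => /eqP h; apply: hn; exists u.
have onto : forall x, exists2 u, u \in K & proj_x u = x.
  apply: inj_onto; first by rewrite dimvf; exact: defect_ker_dim.
  move=> [[x y] [z t]] uK x0; have {}x0 : x = 0 := x0; have /= y0' := y0 _ uK.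
  suff [-> ->] : z = 0 /\ t = 0 by rewrite x0 y0'.
  apply: NNPP => nzt; apply: no_col_kernel; exists (z, t); split.
    by apply/eqP => e; apply: nzt; split; [exact: (congr1 fst e) | exact: (congr1 snd e)].
  move=> j /=; have := defect_ker uK j.
  by rewrite /defect /= x0 y0' !mul0r addr0 subr0.
have [[[g0 g1] g2] [ng hg]] : exists g, g != 0 /\ row_combo g = 0.
  by apply: ker_nonzero; rewrite !dimvf.
move: (congr1 fst hg) (congr1 snd hg) => /= hg0 hg1.
suff [z0 z1 z2] : [/\ g0 = 0, g1 = 0 & g2 = 0] by move: ng; rewrite z0 z1 z2 eqxx.
apply: (sandwich_free_eq0_r corner_free) => x.
have [[[x' y] [z t]] uK xE] := onto x; have {}xE : x' = x := xE; rewrite -xE.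
have ej j : x' * N j 0 0 = N j 0 0 * z + N j 0 1 * t.
  have /= y0' := y0 _ uK.
  by apply/eqP; rewrite eq_sym -subr_eq0 -(defect_ker uK j) /defect /= y0' mul0r addr0.
rewrite -!mulrA !ej; transitivity ((g0 * N 0 0 0 + g1 * N 1 0 0 + g2 * N 2 0 0) * z +
                                   (g0 * N 0 0 1 + g1 * N 1 0 1 + g2 * N 2 0 1) * t).
  by qring.
by rewrite hg0 hg1 !mul0r addr0.
Qed.

End IndependentCorners.

(* If the (0,0) entries of the slices are R-independent, the slices have a
   three-term decomposition: either a row or a column change makes them
   triangular, or an element u of the kernel with y, t != 0 gives row and
   column changes making them all symmetric. *)
Lemma decomp3_free_corner (R : realType) (N : 'I_3 -> 'M[quat R]_2) :
  free [:: N 0 0 0; N 1 0 0; N 2 0 0] -> decomp3 N.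
Proof.
move=> fr.
have [[x [nx hx]]|nrow] := classic (exists x : quat R * quat R,
  x != 0 /\ forall j, x.1 * N j 0 0 + x.2 * N j 1 0 = 0).
  exact: decomp3_row_kernel nx hx.
have [[w [nw hw]]|ncol] := classic (exists w : quat R * quat R,
  w != 0 /\ forall j, N j 0 0 * w.1 + N j 0 1 * w.2 = 0).
  exact: decomp3_col_kernel nw hw.
have [u uK [ny nt]] : exists2 u, u \in lker (linfun (defect_map N)) &
    u.1.2 != 0 /\ u.2.2 != 0.
  have [u1 u1K n1] := defect_ker_t fr nrow; have [u2 u2K n2] := defect_ker_y fr ncol.
  have [e1|] := eqVneq u1.1.2 0; last by exists u1.
  have [e2|] := eqVneq u2.2.2 0; last by exists u2.
  by exists (u1 + u2); rewrite ?memvD //= e1 e2 add0r addr0.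
move: u uK ny nt => [[x y] [z t]] /defect_ker sym /= ny nt.
rewrite -qunitE in ny; rewrite -qunitE in nt.
apply: (decomp3_equiv (X := mx2 1 0 x y) (X' := mx2 1 0 (- (y^-1 * x)) y^-1)
                      (Z := mx2 1 z 0 t) (Z' := mx2 1 (- (z * t^-1)) 0 t^-1)).
- by mx2inv.
- by mx2inv.
apply: decomp3_sym => j /=; rewrite !mulmx3E; mx2simp.
by apply/eqP; rewrite -subr_eq0; apply/eqP; have := sym j; rewrite /defect.
Qed.

Lemma columns_relation (R : realType) (M : 'I_3 -> 'M[quat R]_2) (r0 r1 r2 : R) :
  r0 *: columns (M 0) + r1 *: columns (M 1) + r2 *: columns (M 2) = 0 ->
  forall i k, r0 *: M 0 i k + r1 *: M 1 i k + r2 *: M 2 i k = 0.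
Proof.
move=> e i k.
move: (congr1 (fun u => u.1.1) e) (congr1 (fun u => u.1.2) e)
      (congr1 (fun u => u.2.1) e) (congr1 (fun u => u.2.2) e) => /= e00 e10 e01 e11.
by case: (ord2P i) => ->; case: (ord2P k) => ->.
Qed.

(* Every triple of 2x2 quaternion matrices has a three-term decomposition:
   R-independent slices are normalized so that their corners are independent;
   otherwise one slice is a real combination of the other two. *)
Lemma decomp3_all (R : realType) (M : 'I_3 -> 'M[quat R]_2) : decomp3 M.
Proof.
have [fu|/not_free3 [r0 [r1 [r2 [er nr]]]]] :=
  boolP (free [:: columns (M 0); columns (M 1); columns (M 2)]).
  have [X [X' [Z [Z' [hX hZ f]]]]] := normalize_corner fu.
  exact/(decomp3_equiv hX hZ)/decomp3_free_corner.
have rel := columns_relation er.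
have [z2|n2] := eqVneq r2 0; last exact: decomp3_dependent n2 rel.
have [z1|n1] := eqVneq r1 0.
  have n0 : r0 != 0 by apply/eqP => z0; apply: nr.
  apply: (@decomp3_ext _ _ ((M \o vec3 2 1 0) \o vec3 2 1 0)).
    by move=> j; case: (ord3P j) => ->.
  apply/decomp3_perm/(decomp3_dependent (r0 := r2) (r1 := r1) n0) => i k /=.
  by rewrite -(rel i k) addrC [r2 *: _ + _]addrC addrA.
apply: (@decomp3_ext _ _ ((M \o vec3 0 2 1) \o vec3 0 2 1)).
  by move=> j; case: (ord3P j) => ->.
apply/decomp3_perm/(decomp3_dependent (r0 := r0) (r1 := r2) n1) => i k /=.
by rewrite -(rel i k) -addrA [r2 *: _ + _]addrC addrA.
Qed.

Section RankOfSums.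
Variables (R : realType) (n1 n2 n3 : nat).
Local Notation qt := (qtensor R n1 n2 n3).

Definition tsum (s : seq qt) : qt := foldr (@tadd R n1 n2 n3) (@tzero R n1 n2 n3) s.

Lemma tadd0 (T : qt) : tadd (@tzero R n1 n2 n3) T = T.
Proof.
do 3 apply: functional_extensionality_dep => ?.
by rewrite /tadd /tzero; apply: quat_eq => /=; rewrite add0r.
Qed.

Definition cons_family m (U : qt) (S : 'I_m -> qt) : 'I_m.+1 -> qt :=
  fun l => if unlift ord0 l is Some l' then S l' else U.

Lemma tsum_cons_family m (U : qt) (S : 'I_m -> qt) :
  foldr (fun l acc => tadd (cons_family U S l) acc) (@tzero R n1 n2 n3) (enum 'I_m.+1) =
  tadd U (foldr (fun l acc => tadd (S l) acc) (@tzero R n1 n2 n3) (enum 'I_m)).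
Proof.
rewrite enum_ordSl /= /cons_family unlift_none foldr_map.
by congr (tadd U _); elim: (enum 'I_m) => //= l s ->; rewrite liftK.
Qed.

(* A sum of s tensors of the form a_i b_j c_k has rank at most size s: the
   zero terms are dropped and the others are simple. *)
Lemma rank_le_tsum (s : seq qt) :
  (forall U, List.In U s -> exists a b c, U = outer3 a b c) ->
  qtensor_rank_le (tsum s) (size s).
Proof.
elim: s => [|U s IH] hs.
  exists 0%N; split => //; exists (fun l : 'I_0 => @tzero R n1 n2 n3).
  by split; [case | rewrite enum_ord0].
have [m [hm [S [hS eS]]]] := IH (fun V hV => hs V (or_intror hV)).
have [U0|nU0] := classic (U = @tzero R n1 n2 n3).
  exists m; split; first by rewrite ltnW.
  by exists S; split => //; rewrite /= U0 tadd0.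
exists m.+1; split => //; exists (cons_family U S); split.
  move=> l; rewrite /cons_family; case: (unlift ord0 l) => [l'|]; first exact: hS.
  by split => //; exact: hs U (or_introl erefl).
by rewrite tsum_cons_family /= -eS.
Qed.

End RankOfSums.

Theorem mainTheorem9 (R : realType) (T : qtensor R 2 3 2) :
  qtensor_rank_le T 3.
Proof.
pose M j : 'M[quat R]_2 := \matrix_(i, k) T i j k.
have [a [c [q decM]]] := decomp3_all M.
pose U l := outer3 (a l) (q l) (c l).
have -> : T = tsum [:: U 0; U 1; U 2].
  apply: functional_extensionality_dep => i; apply: functional_extensionality_dep => j.
  apply: functional_extensionality_dep => k.
  have := decM j i k; rewrite /M mxE sum3 => ->.
  by rewrite /= /tadd /tzero /U /outer3 -!qmulE -!qaddE -qzeroE addr0 addrA.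
by apply: rank_le_tsum => V /= [<-|[<-|[<-|[]]]]; eexists _, _, _.
Qed.
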